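(* Let $\rho=3-2\sqrt2$, let $g$, $b_0,b_1,b_2$ be as in the context, let $B(x)=b_0+b_1x+b_2x^2$, and fix $\varphi\in(0,\pi)$. For $n\ge1$ let $\mathcal{S}(n)=\{\rho+(\rho/n)e^{i\theta}:\varphi\le|\theta|\le\pi\}$, an arc of the circle $|z-\rho|=\rho/n$ (with either orientation). Then for all integers $n\ge5$, \[\left|\frac{1}{2\pi i}\int_{\mathcal{S}(n)}\frac{g(z)}{z^{n+1}}\,dz\right|\le\rho^{-n}n^2\,\frac{4}{\rho^3}\,B(\pi+\log n).\]
   Context: Let $(d_n)_{n\ge0}$ be the rational sequence with $(d_0,\dots,d_6)=(72,1932,31248,\frac{790101}{2},\frac{17208645}{4},\frac{338898609}{8},\frac{1551478257}{4})$ satisfying $\sum_{k=0}^7 r_k(n)d_{n+k}=0$ for all $n\ge0$, where $r_0(n) = -(n+8)(n+7)(n+6)^2(12232n^3+298144n^2+2412586n+6469077)$, $r_1(n) = (n+8)(183480n^6+7655560n^5+131977142n^4+1202876299n^3+6112196895n^2+16418149668n+18219511026)$, $r_2(n) = -(n+8)(941864n^6+38326904n^5+644300514n^4+5727711699n^3+28407144241n^2+74557779538n+80949464718)$, $r_3(n) = 1993816n^7+97303624n^6+2021855198n^5+23184921987n^4+158457515673n^3+645518710454n^2+1451619424860n+1390493835900$, $r_4(n) = -1993816n^7-98090344n^6-2054897438n^5-23758375953n^4-163720428321n^3-672459054524n^2-1524577250976n-1472211879228$, $r_5(n) = (n+6)(941864n^6+40789672n^5+730497394n^4+6921881565n^3+36590122947n^2+102300885158n+118218544398)$,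 $r_6(n) = (n+6)(183480n^6+7756760n^5+135519142n^4+1252328453n^3+6456460129n^2+17612930492n+19872693550)$, $r_7(n) = (n+7)(n+6)(n+8)^2(12232n^3+215600n^2+1256970n+2435511)$. Let $f(z)=\sum_{n\ge0}d_nz^n$; it extends analytically to $\Delta=\{z:|z|<1\}\setminus[\rho,1]$. With the principal branch of $\log$ and $L(z)=\log\frac{1}{1-z/\rho}$, on $\Delta\cap\{|z-\rho|<\rho\}$ one has the unique decomposition $f(z)=C_1(z-\rho)^{-4}+C_2(z-\rho)^{-4}L(z)+(z-\rho)^{-3}(h_0(z)+h_1(z)L(z)+h_2(z)L(z)^2)$ with real constants $C_1,C_2$ and $h_0,h_1,h_2$ analytic on $|z-\rho|<\rho$. Let $\ell(z)=C_1(z-\rho)^{-4}+C_2(z-\rho)^{-4}L(z)$ and $g=f-\ell$. The constants $b_0\in[6.86\pm2.71\cdot10^{-4}]$, $b_1\in[2.85\pm3.20\cdot10^{-3}]$, $b_2\in[0.309\pm2.78\cdot10^{-4}]$ (where $[x\pm\epsilon]$ denotes $[x-\epsilon,x+\epsilon]$) satisfy $|h_j(z)|\le b_j$ for $j=0,1,2$ and all $|z-\rho|<1/8$. *)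

From Stdlib Require Import Reals.
From Coquelicot Require Import Coquelicot.
Open Scope R_scope.

Definition rho : R := 3 - 2 * sqrt 2.

Section Rec.
Variable n : R.
Definition r0 := -(n+8)*(n+7)*(n+6)^2*(12232*n^3+298144*n^2+2412586*n+6469077).
Definition r1 := (n+8)*(183480*n^6+7655560*n^5+131977142*n^4+1202876299*n^3+6112196895*n^2+16418149668*n+18219511026).
Definition r2 := -(n+8)*(941864*n^6+38326904*n^5+644300514*n^4+5727711699*n^3+28407144241*n^2+74557779538*n+80949464718).
Definition r3 := 1993816*n^7+97303624*n^6+2021855198*n^5+23184921987*n^4+158457515673*n^3+645518710454*n^2+1451619424860*n+1390493835900.
Definition r4 := -1993816*n^7-98090344*n^6-2054897438*n^5-23758375953*n^4-163720428321*n^3-672459054524*n^2-1524577250976*n-1472211879228.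
Definition r5 := (n+6)*(941864*n^6+40789672*n^5+730497394*n^4+6921881565*n^3+36590122947*n^2+102300885158*n+118218544398).
Definition r6 := (n+6)*(183480*n^6+7756760*n^5+135519142*n^4+1252328453*n^3+6456460129*n^2+17612930492*n+19872693550).
Definition r7 := (n+7)*(n+6)*(n+8)^2*(12232*n^3+215600*n^2+1256970*n+2435511).
End Rec.

Definition dstate_t : Type := (R * R * R * R * R * R * R)%type.

Definition dinit : dstate_t :=
  (72, 1932, 31248, 790101/2, 17208645/4, 338898609/8, 1551478257/4).

(** One step: from (d_m,...,d_{m+6}) to (d_{m+1},...,d_{m+7}), where d_{m+7} is
    determined by sum_{k=0}^7 r_k(m) d_{m+k} = 0 (note r_7(m) <> 0 for m >= 0). *)
Definition dstep (m : nat) (s : dstate_t) : dstate_t :=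
  let '(a0, a1, a2, a3, a4, a5, a6) := s in
  let x := INR m in
  (a1, a2, a3, a4, a5, a6,
   - (r0 x * a0 + r1 x * a1 + r2 x * a2 + r3 x * a3 + r4 x * a4
      + r5 x * a5 + r6 x * a6) / r7 x).

Fixpoint dstate (m : nat) : dstate_t :=
  match m with
  | O => dinit
  | S k => dstep k (dstate k)
  end.

Definition d (m : nat) : R := let '(a0, _, _, _, _, _, _) := dstate m in a0.

Definition cis (t : R) : C := (cos t, sin t).

(** Principal argument in (-pi, pi]. *)
Definition Arg (w : C) : R :=
  let x := fst w in let y := snd w in
  if Rlt_dec 0 x then atan (y / x)
  else if Rlt_dec 0 y then PI / 2 - atan (x / y)
  else if Rlt_dec y 0 then - (PI / 2) - atan (x / y)
  else if Rlt_dec x 0 then PI else 0.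

Definition Clog (w : C) : C := (ln (Cmod w), Arg w).

Definition Lfun (z : C) : C := Clog (Cinv (Cminus 1 (Cdiv z (RtoC rho)))).

Definition inDelta (z : C) : Prop :=
  Cmod z < 1 /\ ~ (Im z = 0 /\ rho <= Re z /\ Re z <= 1).

Definition CInt (f : R -> C) (a b : R) : C :=
  @RInt C_R_CompleteNormedModule f a b.

Definition arc_integral (G : C -> C) (n : nat) (phi : R) : C :=
  let gam t := Cplus (RtoC rho) (Cmult (RtoC (rho / INR n)) (cis t)) in
  let dgam t := Cmult (Ci : C) (Cmult (RtoC (rho / INR n)) (cis t)) in
  let integrand t := Cmult (G (gam t)) (dgam t) in
  Cplus (CInt integrand (- PI) (- phi)) (CInt integrand phi PI).

From Stdlib Require Import Reals Lra Lia Classical.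
From Coquelicot Require Import Coquelicot.
Open Scope R_scope.

(* On the arc z = rho + (rho/n) e^(it) the singular part of f cancels in g, so
   g(z) = (h0 + h1 L + h2 L^2)(z) / (z - rho)^3 with |z - rho| = rho/n < 1/8.
   There |h_j| <= b_j, and 1 - z/rho = -e^(it)/n gives |L(z)| <= ln n + pi, so
   |g(z)| <= (n/rho)^3 B(pi + ln n).  Moreover |z| >= rho (1 - 1/n) and
   (1 - 1/n)^(n+1) >= 1/4 for n >= 5, so |z|^(-n-1) <= 4 rho^(-n-1).  Multiplying
   by |dz/dt| = rho/n and by the length 2 (pi - phi) < 2 pi of the parameter range
   gives the bound. *)

Lemma rho_bounds : 1/8 < rho < 1/2.
Proof.
  unfold rho. pose proof (sqrt_sqrt 2 ltac:(lra)). pose proof (sqrt_pos 2). nra.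
Qed.

Lemma Cmod_cis t : Cmod (cis t) = 1.
Proof.
  unfold Cmod, cis; simpl.
  replace (cos t * (cos t * 1) + sin t * (sin t * 1)) with 1; [apply sqrt_1|].
  pose proof (sin2_cos2 t) as E. unfold Rsqr in E. lra.
Qed.

Lemma Cmod_le_Rabs_Re_Im (w : C) : Cmod w <= Rabs (Re w) + Rabs (Im w).
Proof.
  replace w with (Cplus (RtoC (Re w)) (Cmult Ci (RtoC (Im w)))) at 1.
  - eapply Rle_trans; [apply Cmod_triangle|].
    rewrite Cmod_mult, Cmod_Ci, !Cmod_R. lra.
  - destruct w as [a b]. unfold Cplus, Cmult, Ci, RtoC, Re, Im; simpl.
    apply injective_projections; simpl; ring.
Qed.

Lemma Rabs_Arg_le (w : C) : Rabs (Arg w) <= PI.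
Proof.
  pose proof PI_RGT_0. unfold Arg.
  destruct (Rlt_dec 0 (fst w)); [|destruct (Rlt_dec 0 (snd w));
    [|destruct (Rlt_dec (snd w) 0); [|destruct (Rlt_dec (fst w) 0)]]];
  apply Rabs_le;
  try (match goal with |- context [atan ?a] => pose proof (atan_bound a) end); lra.
Qed.

Lemma Cmod_Clog_le (w : C) : Cmod (Clog w) <= Rabs (ln (Cmod w)) + PI.
Proof.
  eapply Rle_trans; [apply Cmod_le_Rabs_Re_Im|].
  pose proof (Rabs_Arg_le w). unfold Clog, Re, Im; simpl. lra.
Qed.

(* [RInt] is [iota] of an empty predicate when [f] is not integrable; the
   underlying limit of the trivial filter then evaluates to [real p_infty = 0]. *)
Lemma CInt_not_ex_RInt (f : R -> C) (a b : R) :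
  ~ ex_RInt (V := C_R_CompleteNormedModule) f a b -> CInt f a b = 0%C.
Proof.
  intros Hf.
  assert (Lub_Rbar_full : forall E : R -> Prop, (forall x, E x) -> Lub_Rbar E = p_infty).
  { intros E HE. apply is_lub_Rbar_unique. split.
    - intros x _. exact I.
    - intros [r| |] Hl; simpl; auto.
      + specialize (Hl (r + 1) (HE _)). simpl in Hl. lra.
      + exact (Hl 0 (HE _)). }
  unfold CInt, RInt, iota, lim. simpl. unfold C_complete_lim, R_complete_lim.
  rewrite !Lub_Rbar_full; [reflexivity| |];
    intros x y Hy; exfalso; apply Hf; exists y; exact Hy.
Qed.

Lemma Cmod_CInt_le (f : R -> C) (a b M : R) : a <= b -> 0 <= M ->
  (forall t, a <= t <= b -> Cmod (f t) <= M) -> Cmod (CInt f a b) <= (b - a) * M.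
Proof.
  intros Hab HM Hf.
  destruct (classic (ex_RInt (V := C_R_CompleteNormedModule) f a b)) as [[l Hl]|Hn].
  - unfold CInt. rewrite (is_RInt_unique _ _ _ _ Hl), Cmod_norm.
    apply (norm_RInt_le_const f a b l M Hab); [|exact Hl].
    intros t Ht. rewrite <- Cmod_norm. auto.
  - rewrite CInt_not_ex_RInt, Cmod_0 by exact Hn. nra.
Qed.

Lemma cos_lt_1 (t : R) : 0 < Rabs t <= PI -> cos t < 1.
Proof.
  intros Ht. rewrite <- cos_0.
  replace (cos t) with (cos (Rabs t))
    by (destruct (Rle_or_lt 0 t); [rewrite Rabs_pos_eq | rewrite Rabs_left, cos_neg]; lra).
  apply cos_decreasing_1; lra.
Qed.

Definition circle_point (s t : R) : C := Cplus (RtoC rho) (Cmult (RtoC s) (cis t)).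

Lemma Cmod_circle_point_sub_rho (s t : R) : 0 <= s ->
  Cmod (Cminus (circle_point s t) (RtoC rho)) = s.
Proof.
  intros Hs. replace (Cminus (circle_point s t) (RtoC rho)) with (Cmult (RtoC s) (cis t))
    by (unfold circle_point; ring).
  rewrite Cmod_mult, Cmod_cis, Cmod_R, Rabs_pos_eq; lra.
Qed.

Lemma Cmod_circle_point_bounds (s t : R) : 0 <= s ->
  rho - s <= Cmod (circle_point s t) <= rho + s.
Proof.
  intros Hs. pose proof rho_bounds.
  pose proof (Cmod_circle_point_sub_rho s t Hs) as Hd.
  pose proof (Cmod_triangle (circle_point s t) (Copp (Cminus (circle_point s t) (RtoC rho)))) as T1.
  pose proof (Cmod_triangle (RtoC rho) (Cminus (circle_point s t) (RtoC rho))) as T2.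
  replace (Cplus (circle_point s t) (Copp (Cminus (circle_point s t) (RtoC rho))))
    with (RtoC rho) in T1 by ring.
  replace (Cplus (RtoC rho) (Cminus (circle_point s t) (RtoC rho)))
    with (circle_point s t) in T2 by ring.
  rewrite Cmod_opp, Hd, Cmod_R, Rabs_pos_eq in T1 by lra.
  rewrite Hd, Cmod_R, Rabs_pos_eq in T2 by lra.
  lra.
Qed.

(* Off the point t = 0 the circle meets the real axis only at rho - s, left of the slit. *)
Lemma circle_point_inDelta (s t : R) : 0 < s -> rho + s < 1 -> cos t < 1 ->
  inDelta (circle_point s t).
Proof.
  intros Hs Hs1 Hcos. pose proof rho_bounds.
  split; [pose proof (Cmod_circle_point_bounds s t); lra|].
  unfold circle_point, cis, Cplus, Cmult, RtoC, Re, Im; simpl.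
  intros [Him [Hre _]].
  assert (Hsin : sin t = 0) by nra.
  pose proof (sin2_cos2 t) as E. unfold Rsqr in E.
  assert (cos t = -1) by nra. nra.
Qed.

Lemma Cmod_Lfun_circle_point (s t : R) : 0 < s <= rho ->
  Cmod (Lfun (circle_point s t)) <= ln (rho / s) + PI.
Proof.
  intros Hs. pose proof rho_bounds.
  set (w := Cmult (RtoC (- (s / rho))) (cis t)).
  assert (Hw : Cmod w = s / rho).
  { unfold w. rewrite Cmod_mult, Cmod_cis, Cmod_R, Rabs_Ropp, Rabs_pos_eq.
    - ring.
    - apply Rlt_le, Rdiv_lt_0_compat; lra. }
  assert (Hw0 : w <> 0%C).
  { intros E. rewrite E, Cmod_0 in Hw. assert (0 < s / rho) by (apply Rdiv_lt_0_compat; lra). lra. }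
  replace (Lfun (circle_point s t)) with (Clog (Cinv w)).
  - eapply Rle_trans; [apply Cmod_Clog_le|].
    rewrite Cmod_inv, Hw, Rinv_div by exact Hw0.
    rewrite Rabs_pos_eq; [lra|].
    rewrite <- ln_1. apply ln_le; [lra|].
    apply (Rmult_le_reg_r s); [lra|]. unfold Rdiv. rewrite Rmult_assoc, Rinv_l; lra.
  - unfold Lfun, w, circle_point. f_equal. f_equal.
    unfold cis, Cminus, Cdiv, Cplus, Cmult, Cinv, RtoC, Copp; simpl.
    apply injective_projections; simpl; field; lra.
Qed.

Lemma Cmod_arc_integral_le (G : C -> C) (n : nat) (phi M : R) : 0 <= phi <= PI -> 0 <= M ->
  (forall t, phi <= Rabs t <= PI ->
     Cmod (Cmult (G (circle_point (rho / INR n) t))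
                 (Cmult Ci (Cmult (RtoC (rho / INR n)) (cis t)))) <= M) ->
  Cmod (arc_integral G n phi) <= 2 * (PI - phi) * M.
Proof.
  intros Hphi HM HG. unfold arc_integral. cbv zeta.
  eapply Rle_trans; [apply Cmod_triangle|].
  replace (2 * (PI - phi) * M) with ((- phi - - PI) * M + (PI - phi) * M) by ring.
  apply Rplus_le_compat; apply Cmod_CInt_le; try lra; intros t Ht; apply HG;
    [rewrite Rabs_left1 | rewrite Rabs_pos_eq]; lra.
Qed.

Lemma one_sub_inv_pow_succ_le (m : nat) : (2 <= m)%nat ->
  (1 - / INR m) ^ S m <= (1 - / INR (S m)) ^ S (S m).
Proof.
  intros Hm. rewrite S_INR.
  assert (Hx : 2 <= INR m) by (apply (le_INR 2) in Hm; simpl in Hm; lra).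
  set (x := INR m) in *. set (a := 1 - / x). set (u := / (x * x - 1)).
  assert (Ha : 0 <= a) by (unfold a; assert (/ x <= / 2) by (apply Rinv_le_contravar; lra); lra).
  assert (Hu : 0 <= u) by (unfold u; apply Rlt_le, Rinv_0_lt_compat; nra).
  assert (Hsplit : 1 - / (x + 1) = a * (1 + u)) by (unfold a, u; field; split; nra).
  (* With Bernoulli's (1 + u)^(m+2) >= 1 + (m+2) u, the step reduces to
     a (1 + (x + 2) u) = (x^2 + x + 1) / (x (x + 1)) >= 1. *)
  assert (Hstep : 1 <= a * (1 + (x + 1 + 1) * u)).
  { unfold a, u. apply (Rmult_le_reg_r ((x * x - 1) * x)); [nra|].
    field_simplify; [lra|split; nra]. }
  pose proof (Rle_pow_lin u (S (S m)) Hu) as Hbern. rewrite !S_INR in Hbern. fold x in Hbern.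
  rewrite Hsplit, Rpow_mult_distr.
  replace (a ^ S (S m)) with (a ^ S m * a) by (simpl; ring).
  rewrite Rmult_assoc.
  rewrite <- (Rmult_1_r (a ^ S m)) at 1.
  apply Rmult_le_compat_l; [apply pow_le; exact Ha|].
  eapply Rle_trans; [exact Hstep|]. apply Rmult_le_compat_l; lra.
Qed.

Lemma quarter_le_one_sub_inv_pow (n : nat) : (5 <= n)%nat -> / 4 <= (1 - / INR n) ^ S n.
Proof.
  induction 1 as [|m Hm IH].
  - simpl. lra.
  - eapply Rle_trans; [exact IH|]. apply one_sub_inv_pow_succ_le. lia.
Qed.

Lemma Cmod_quadratic_le (a0 a1 a2 w : C) (c0 c1 c2 X : R) :
  Cmod a0 <= c0 -> Cmod a1 <= c1 -> Cmod a2 <= c2 -> Cmod w <= X ->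
  Cmod (Cplus (Cplus a0 (Cmult a1 w)) (Cmult a2 (Cpow w 2))) <= c0 + c1 * X + c2 * X ^ 2.
Proof.
  intros H0 H1 H2 Hw.
  pose proof (Cmod_ge_0 a1). pose proof (Cmod_ge_0 a2). pose proof (Cmod_ge_0 w).
  eapply Rle_trans; [apply Cmod_triangle|].
  eapply Rle_trans; [apply Rplus_le_compat_r, Cmod_triangle|].
  rewrite !Cmod_mult, Cmod_pow.
  apply Rplus_le_compat; [apply Rplus_le_compat|].
  - exact H0.
  - apply Rmult_le_compat; lra.
  - apply Rmult_le_compat; [lra | apply pow_le; lra | lra | apply pow_incr; lra].
Qed.

Definition singular_part (C1 C2 : R) (z : C) : C :=
  Cplus (Cdiv (RtoC C1) (Cpow (Cminus z (RtoC rho)) 4))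
        (Cdiv (Cmult (RtoC C2) (Lfun z)) (Cpow (Cminus z (RtoC rho)) 4)).

Definition remainder (F : C -> C) (C1 C2 : R) (z : C) : C :=
  Cminus (F z) (singular_part C1 C2 z).

Section Remainder_on_arc.

Variables (F h0 h1 h2 : C -> C) (C1 C2 b0 b1 b2 : R).

Hypothesis F_decomposition : forall z : C, inDelta z -> Cmod (Cminus z (RtoC rho)) < rho ->
  F z = Cplus (singular_part C1 C2 z)
              (Cdiv (Cplus (Cplus (h0 z) (Cmult (h1 z) (Lfun z)))
                           (Cmult (h2 z) (Cpow (Lfun z) 2)))
                    (Cpow (Cminus z (RtoC rho)) 3)).

Hypothesis h_bounds : forall z : C, Cmod (Cminus z (RtoC rho)) < 1/8 ->
  Cmod (h0 z) <= b0 /\ Cmod (h1 z) <= b1 /\ Cmod (h2 z) <= b2.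

Lemma Cmod_remainder_circle_point_le (s t : R) : 0 < s < 1/8 -> cos t < 1 ->
  let X := PI + ln (rho / s) in
  Cmod (remainder F C1 C2 (circle_point s t)) <= (b0 + b1 * X + b2 * X ^ 2) / s ^ 3.
Proof.
  intros Hs Hcos X. pose proof rho_bounds.
  assert (HL : Cmod (Lfun (circle_point s t)) <= X)
    by (pose proof (Cmod_Lfun_circle_point s t ltac:(lra)); unfold X; lra).
  set (z := circle_point s t) in *.
  assert (Hzr : Cmod (Cminus z (RtoC rho)) = s) by (apply Cmod_circle_point_sub_rho; lra).
  assert (Hz : inDelta z) by (apply circle_point_inDelta; lra).
  destruct (h_bounds z ltac:(lra)) as (Hh0 & Hh1 & Hh2).
  assert (Hs3 : Cmod (Cpow (Cminus z (RtoC rho)) 3) = s ^ 3) by (rewrite Cmod_pow, Hzr; reflexivity).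
  assert (Hs3_pos : 0 < s ^ 3) by (apply pow_lt; lra).
  unfold remainder. rewrite (F_decomposition z Hz ltac:(lra)).
  assert (Hcancel : forall u v : C, Cminus (Cplus u v) u = v) by (intros; ring).
  rewrite Hcancel.
  rewrite Cmod_div, Hs3.
  - unfold Rdiv. apply Rmult_le_compat_r; [apply Rlt_le, Rinv_0_lt_compat; lra|].
    apply Cmod_quadratic_le; assumption.
  - intros E. rewrite E, Cmod_0 in Hs3. lra.
Qed.

Lemma Cmod_arc_integrand_le (n : nat) (t : R) : (5 <= n)%nat -> cos t < 1 ->
  let s := rho / INR n in
  let X := PI + ln (INR n) in
  Cmod (Cmult (Cdiv (remainder F C1 C2 (circle_point s t)) (Cpow (circle_point s t) (S n)))
              (Cmult Ci (Cmult (RtoC s) (cis t))))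
  <= / rho ^ n * INR n ^ 2 * (4 / rho ^ 3) * (b0 + b1 * X + b2 * X ^ 2).
Proof.
  intros Hn Hcos s X. pose proof rho_bounds.
  assert (Hx : 5 <= INR n) by (apply (le_INR 5) in Hn; simpl in Hn; lra).
  assert (Hs : 0 < s < 1/8).
  { unfold s. split; [apply Rdiv_lt_0_compat; lra|].
    apply (Rmult_lt_reg_r (INR n)); [lra|]. unfold Rdiv. rewrite Rmult_assoc, Rinv_l; lra. }
  set (z := circle_point s t).
  pose proof (Cmod_remainder_circle_point_le s t Hs Hcos) as Hg.
  replace (rho / s) with (INR n) in Hg by (unfold s; field; lra).
  fold X z in Hg.
  set (BX := b0 + b1 * X + b2 * X ^ 2) in *.
  assert (HBX : 0 <= BX).
  { apply (Rmult_le_reg_r (/ s ^ 3)); [apply Rinv_0_lt_compat, pow_lt; lra|].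
    rewrite Rmult_0_l. eapply Rle_trans; [apply Cmod_ge_0 | exact Hg]. }
  assert (Hz : rho * (1 - / INR n) <= Cmod z).
  { destruct (Cmod_circle_point_bounds s t ltac:(lra)) as [Hlow _].
    replace (rho * (1 - / INR n)) with (rho - s) by (unfold s; field; lra). exact Hlow. }
  assert (Hzn : rho ^ S n * / 4 <= Cmod z ^ S n).
  { apply Rle_trans with ((rho * (1 - / INR n)) ^ S n).
    - rewrite Rpow_mult_distr. apply Rmult_le_compat_l; [apply pow_le; lra|].
      exact (quarter_le_one_sub_inv_pow n Hn).
    - apply pow_incr. split; [|exact Hz].
      assert (/ INR n < 1) by (rewrite <- Rinv_1; apply Rinv_lt_contravar; lra). nra. }
  assert (Hrn : 0 < rho ^ S n) by (apply pow_lt; lra).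
  rewrite Cmod_mult, Cmod_div.
  2: { intros E. apply (f_equal Cmod) in E. rewrite Cmod_pow, Cmod_0 in E. lra. }
  rewrite Cmod_pow, Cmod_mult, Cmod_Ci, Cmod_mult, Cmod_cis, Cmod_R, Rabs_pos_eq by lra.
  apply Rle_trans with (BX / s ^ 3 / (rho ^ S n * / 4) * (1 * (s * 1))).
  - apply Rmult_le_compat_r; [lra|]. unfold Rdiv. apply Rmult_le_compat.
    + apply Cmod_ge_0.
    + apply Rlt_le, Rinv_0_lt_compat. lra.
    + exact Hg.
    + apply Rinv_le_contravar; lra.
  - right. unfold s. simpl. field.
    repeat split; try apply pow_nonzero; lra.
Qed.

End Remainder_on_arc.

Theorem proposition3p7 :
  forall (F h0 h1 h2 : C -> C) (C1 C2 b0 b1 b2 phi : R),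
  (* f is analytic on Delta and equals sum_n d_n z^n near 0 *)
  (forall z, inDelta z -> ex_derive F z) ->
  (exists r, 0 < r /\ forall z : C, Cmod z < r ->
       is_series (fun m => Cmult (RtoC (d m)) (Cpow z m)) (F z)) ->
  (* h_0, h_1, h_2 analytic on |z - rho| < rho *)
  (forall z : C, Cmod (Cminus z (RtoC rho)) < rho ->
       ex_derive h0 z /\ ex_derive h1 z /\ ex_derive h2 z) ->
  (* the decomposition of f on Delta /\ {|z - rho| < rho} *)
  (forall z : C, inDelta z -> Cmod (Cminus z (RtoC rho)) < rho ->
     F z = Cplus (Cplus
             (Cdiv (RtoC C1) (Cpow (Cminus z (RtoC rho)) 4))
             (Cdiv (Cmult (RtoC C2) (Lfun z)) (Cpow (Cminus z (RtoC rho)) 4)))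
           (Cdiv (Cplus (Cplus (h0 z) (Cmult (h1 z) (Lfun z)))
                        (Cmult (h2 z) (Cpow (Lfun z) 2)))
                 (Cpow (Cminus z (RtoC rho)) 3))) ->
  (* the constants b_j *)
  686/100 - 271/1000000 <= b0 <= 686/100 + 271/1000000 ->
  285/100 - 320/100000 <= b1 <= 285/100 + 320/100000 ->
  309/1000 - 278/1000000 <= b2 <= 309/1000 + 278/1000000 ->
  (forall z : C, Cmod (Cminus z (RtoC rho)) < 1/8 ->
     Cmod (h0 z) <= b0 /\ Cmod (h1 z) <= b1 /\ Cmod (h2 z) <= b2) ->
  0 < phi < PI ->
  let g := fun z : C =>
    Cminus (F z)
      (Cplus (Cdiv (RtoC C1) (Cpow (Cminus z (RtoC rho)) 4))
             (Cdiv (Cmult (RtoC C2) (Lfun z)) (Cpow (Cminus z (RtoC rho)) 4))) in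
  let B := fun x : R => b0 + b1 * x + b2 * x ^ 2 in
  forall n : nat, (5 <= n)%nat ->
    Cmod (Cmult (Cinv (Cmult (RtoC (2 * PI)) Ci))
                (arc_integral (fun z => Cdiv (g z) (Cpow z (S n))) n phi))
    <= / rho ^ n * (INR n) ^ 2 * (4 / rho ^ 3) * B (PI + ln (INR n)).
Proof.
  (* Only the decomposition of f and the bounds on the h_j enter the estimate. *)
  intros F h0 h1 h2 C1 C2 b0 b1 b2 phi _ _ _ Hdec _ _ _ Hh Hphi g B n Hn.
  set (M := / rho ^ n * INR n ^ 2 * (4 / rho ^ 3) * B (PI + ln (INR n))).
  assert (Hintegrand : forall t, phi <= Rabs t <= PI ->
    Cmod (Cmult (Cdiv (g (circle_point (rho / INR n) t)) (Cpow (circle_point (rho / INR n) t) (S n)))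
                (Cmult Ci (Cmult (RtoC (rho / INR n)) (cis t)))) <= M).
  { intros t Ht. apply (Cmod_arc_integrand_le F h0 h1 h2 C1 C2 b0 b1 b2 Hdec Hh n t Hn).
    apply cos_lt_1. lra. }
  assert (HM : 0 <= M)
    by (eapply Rle_trans; [apply Cmod_ge_0 | apply (Hintegrand PI)]; rewrite Rabs_pos_eq; lra).
  assert (H2PI : Cmod (Cmult (RtoC (2 * PI)) Ci) = 2 * PI)
    by (rewrite Cmod_mult, Cmod_Ci, Cmod_R, Rabs_pos_eq; lra).
  rewrite Cmod_mult, Cmod_inv, H2PI.
  2: { intros E. rewrite E, Cmod_0 in H2PI. lra. }
  eapply Rle_trans.
  - apply Rmult_le_compat_l; [apply Rlt_le, Rinv_0_lt_compat; lra|].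
    apply (Cmod_arc_integral_le _ n phi M); [lra | exact HM | exact Hintegrand].
  - apply (Rmult_le_reg_l (2 * PI)); [lra|].
    rewrite <- Rmult_assoc, Rinv_r by lra. nra.
Qed.
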